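(* Let $n\ge1$, $A=\begin{bmatrix}1&2\\0&1\end{bmatrix}$, $B=\begin{bmatrix}1&0\\2&1\end{bmatrix}$, $\Gamma(2)$ the principal congruence subgroup of level $2$ (generated in $\mathrm{PSL}_2(\mathbb{Z})$ by $A,B$), and $\Phi(n)=\langle A^n,B^n,\Gamma(2)'\rangle$ where $\Gamma(2)'$ is the commutator subgroup of $\Gamma(2)$. Let $\pi:\bar{\mathfrak{H}}\to\bar{\mathfrak{H}}/\Phi(n)=X_{\Phi(n)}$ be the quotient map, where $\bar{\mathfrak{H}}=\mathfrak{H}\cup\mathbb{P}^1(\mathbb{Q})$ with $\mathrm{SL}_2(\mathbb{Z})$ acting by fractional linear transformations. Then: (1) the actions of $A$ and $B$ on $X_{\Phi(n)}$ commute; (2) $\pi(A^k\cdot 1)=\pi(B^k\cdot 1)$ for every $k\in\mathbb{Z}$.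
   Context: Since $\Phi(n)$ contains the commutator subgroup of $\Gamma(2)$, it is normal in $\Gamma(2)$, so $\Gamma(2)$ acts on $X_{\Phi(n)}$ via $\pi(z)\mapsto\pi(g z)$. Here $1\in\mathbb{P}^1(\mathbb{Q})\subset\bar{\mathfrak{H}}$. *)

From mathcomp Require Import all_boot all_algebra.
From mathcomp Require Import reals complex.
Set Implicit Arguments.
Unset Strict Implicit.
Unset Printing Implicit Defensive.
Import GRing.Theory Num.Theory.
Local Open Scope ring_scope.

Notation mat2 := 'M[int]_2.

Definition matA : mat2 := \matrix_(i < 2, j < 2)
  (if (i == 0) && (j == 1) then 2%:Z else if i == j then 1 else 0).
Definition matB : mat2 := \matrix_(i < 2, j < 2)
  (if (i == 1) && (j == 0) then 2%:Z else if i == j then 1 else 0).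

Inductive gen (S : mat2 -> Prop) : mat2 -> Prop :=
| gen_in g : S g -> gen S g
| gen_1 : gen S 1
| gen_M g h : gen S g -> gen S h -> gen S (g * h)
| gen_V g : gen S g -> gen S g^-1.

(* Gamma(2) = <A, B> (its image in PSL_2(Z) is the principal congruence
   subgroup of level 2). *)
Definition Gamma2 : mat2 -> Prop := gen (fun g => g = matA \/ g = matB).

Definition Gamma2' : mat2 -> Prop :=
  gen (fun g => exists x y, Gamma2 x /\ Gamma2 y /\ g = x^-1 * y^-1 * x * y).

Definition Phi (n : nat) : mat2 -> Prop :=
  gen (fun g => g = matA ^+ n \/ g = matB ^+ n \/ Gamma2' g).

(* Points of the extended upper half plane Hbar = H u P^1(Q):
   Hinf = the cusp infinity, Hcusp q = the rational cusp q, Hup z = z in C. *)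
Inductive hpt (R : realType) :=
| Hinf
| Hcusp of rat
| Hup of R[i].
Arguments Hinf {R}.
Arguments Hcusp {R} _.
Arguments Hup {R} _.

Definition inHbar (R : realType) (p : hpt R) : Prop :=
  match p with
  | Hup z => 0 < complex.Im z
  | _ => True
  end.

Definition act (R : realType) (g : mat2) (p : hpt R) : hpt R :=
  let a := g 0 0 in let b := g 0 1 in let c := g 1 0 in let d := g 1 1 in
  match p with
  | Hinf => if c == 0 then Hinf else Hcusp ((a%:~R : rat) / c%:~R)
  | Hcusp q =>
      if c%:~R * q + d%:~R == 0 then Hinf
      else Hcusp ((a%:~R * q + b%:~R) / (c%:~R * q + d%:~R))
  | Hup z => Hup ((a%:~R * z + b%:~R) / (c%:~R * z + d%:~R))
  end.

(* pi(p) = pi(q) in X_{Phi(n)} = Hbar / Phi(n). *)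
Definition piEq (R : realType) (n : nat) (p q : hpt R) : Prop :=
  exists g, Phi n g /\ act g p = q.

(* Fractional linear transformations compose like matrix products (on cusps,
   seen in homogeneous coordinates, and on the upper half plane), so both
   claims reduce to membership in Gamma(2)' <= Phi(n).  For (1), BA is the
   commutator B A B^-1 A^-1 times AB.  For (2), A B^-1 fixes the cusp 1, and
   modulo the normal subgroup Gamma(2)' of Gamma(2) the element
   B^k (A B^-1)^k agrees with A^k; hence A^k.1 and B^k.1 = B^k (A B^-1)^k.1
   lie in one Gamma(2)'-orbit. *)
From mathcomp Require Import all_boot all_algebra.
From mathcomp Require Import reals complex ring.
Set Implicit Arguments.
Unset Strict Implicit.
Unset Printing Implicit Defensive.
Import GRing.Theory Num.Theory.
Local Open Scope ring_scope.

Lemma mul_mx2E (R : pzRingType) (g h : 'M[R]_2) i j :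
  (g * h) i j = g i 0 * h 0 j + g i 1 * h 1 j.
Proof.
rewrite -mulmxE mxE big_ord_recl big_ord1.
have e0 : ord0 = 0 :> 'I_2 by apply: val_inj.
have e1 : lift ord0 ord0 = 1 :> 'I_2 by apply: val_inj.
by rewrite e0 e1.
Qed.

Lemma det_mx2E (R : comPzRingType) (g : 'M[R]_2) :
  \det g = g 0 0 * g 1 1 - g 0 1 * g 1 0.
Proof.
rewrite (expand_det_row g 0) big_ord_recl big_ord1 /cofactor !det_mx11 !mxE /=.
have e0 : ord0 = 0 :> 'I_2 by apply: val_inj.
have e1 : lift ord0 ord0 = 1 :> 'I_2 by apply: val_inj.
have e2 : lift 1 0 = 0 :> 'I_2 by apply: val_inj.
by rewrite e0 e1 e2 expr0 expr1 mul1r mulN1r mulrN.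
Qed.

Lemma unitmx2_det_neq0 (h : mat2) : h \is a GRing.unit -> \det h != 0.
Proof. by move=> uh; apply: contraTneq uh => d0; rewrite unitmxE d0 unitr0. Qed.

Lemma det_neq0_row1 (h : mat2) : \det h != 0 -> (h 1 0 != 0) || (h 1 1 != 0).
Proof.
apply: contraTT; rewrite negb_or !negbK det_mx2E => /andP[/eqP-> /eqP->].
by rewrite !mulr0 subrr.
Qed.

Lemma mx2_vec_neq0 (F : numFieldType) (h : mat2) (x y : F) :
  \det h != 0 -> (x != 0) || (y != 0) ->
  ((h 0 0)%:~R * x + (h 0 1)%:~R * y != 0) || ((h 1 0)%:~R * x + (h 1 1)%:~R * y != 0).
Proof.
move=> dh; apply: contraTT; rewrite !negb_or !negbK => /andP[/eqP e0 /eqP e1].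
have dF : ((\det h)%:~R : F) != 0 by rewrite intr_eq0.
have dx : (\det h)%:~R * x = (h 1 1)%:~R * ((h 0 0)%:~R * x + (h 0 1)%:~R * y)
                          - (h 0 1)%:~R * ((h 1 0)%:~R * x + (h 1 1)%:~R * y).
  by rewrite det_mx2E rmorphB !rmorphM /=; ring.
have dy : (\det h)%:~R * y = (h 0 0)%:~R * ((h 1 0)%:~R * x + (h 1 1)%:~R * y)
                          - (h 1 0)%:~R * ((h 0 0)%:~R * x + (h 0 1)%:~R * y).
  by rewrite det_mx2E rmorphB !rmorphM /=; ring.
rewrite e0 e1 !mulr0 subr0 in dx dy.
by apply/andP; split; apply/eqP; apply: (mulfI dF); rewrite mulr0.
Qed.

(* No hypothesis on the denominator: when it vanishes both sides are 0,
   since x / 0 = 0. *)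
Lemma mobius_div (F : fieldType) (a b c d x y : F) : y != 0 ->
  (a * (x / y) + b) / (c * (x / y) + d) = (a * x + b * y) / (c * x + d * y).
Proof.
move=> y0; have homog u v : u * x + v * y = (u * (x / y) + v) * y by field.
by rewrite !homog invfM mulrACA mulfV // mulr1.
Qed.

Lemma upper_half_affine_neq0 (R : realType) (c d : int) (z : R[i]) :
  0 < complex.Im z -> (c != 0) || (d != 0) -> c%:~R * z + d%:~R != 0.
Proof.
move=> Imz cd0; rewrite -!(rmorph_int (real_complex R)).
case: z Imz => x y /= y0; rewrite eq_complex /= negb_and !mul0r subr0 !addr0.
move: cd0; have [-> /= d0 | c0 _] := eqVneq c 0.
  by rewrite mul0r add0r intr_eq0 d0.
by rewrite mulf_neq0 ?orbT ?intr_eq0 // lt0r_neq0.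
Qed.

Lemma gen_exprz S g k : gen S g -> gen S (g ^ k).
Proof.
have gen_exprn m : gen S g -> gen S (g ^+ m).
  by move=> Sg; elim: m => [|m IHm]; [exact: gen_1 | rewrite exprS; exact: gen_M].
by case: k => m Sg; [exact: gen_exprn | apply: gen_V; exact: gen_exprn].
Qed.

Lemma gen_unit S : (forall g, S g -> g \is a GRing.unit) ->
  forall g, gen S g -> g \is a GRing.unit.
Proof.
move=> S_unit g; elim=> [h /S_unit //| | x y _ ux _ uy | x _ ux].
- exact: unitr1.
- by rewrite unitrMl.
- by rewrite unitrV.
Qed.

Lemma Gamma2_matA : Gamma2 matA. Proof. by apply: gen_in; left. Qed.

Lemma Gamma2_matB : Gamma2 matB. Proof. by apply: gen_in; right. Qed.

Lemma Gamma2_unit g : Gamma2 g -> g \is a GRing.unit.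
Proof.
by apply: gen_unit => _ [|] ->; rewrite unitmxE det_mx2E !mxE /= unitr1.
Qed.

Lemma Gamma2'_Gamma2 g : Gamma2' g -> Gamma2 g.
Proof.
elim=> [_ [x [y [Gx [Gy ->]]]] | | x y _ Gx _ Gy | x _ Gx].
- by do 3!apply: gen_M => //; apply: gen_V.
- exact: gen_1.
- exact: gen_M.
- exact: gen_V.
Qed.

Lemma Gamma2'_commutator x y : Gamma2 x -> Gamma2 y -> Gamma2' (x * y / x / y).
Proof.
move=> Gx Gy; apply: gen_in; exists x^-1, y^-1.
by rewrite !invrK; split; [exact: gen_V | split; [exact: gen_V |]].
Qed.

Lemma Gamma2'_conj z g : Gamma2 z -> Gamma2' g -> Gamma2' (z * g / z).
Proof.
move=> Gz G'g; have ug := Gamma2_unit (Gamma2'_Gamma2 G'g).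
have -> : z * g / z = g * (g^-1 * z / g^-1 / z) by rewrite invrK !mulrA mulrV ?mul1r.
apply: gen_M => //; apply: Gamma2'_commutator => //.
exact/gen_V/Gamma2'_Gamma2.
Qed.

Lemma Gamma2'_conjM z g w :
  Gamma2 z -> Gamma2 w -> Gamma2' g -> Gamma2' (z * g * w / z / w).
Proof.
move=> Gz Gw G'g; have uz := Gamma2_unit Gz.
have -> : z * g * w / z / w = (z * g / z) * (z * w / z / w) by rewrite !mulrA divrK.
by apply: gen_M; [exact: Gamma2'_conj | exact: Gamma2'_commutator].
Qed.

Lemma Gamma2'_exprz_coset x y k : Gamma2 x -> Gamma2 y ->
  Gamma2' (y ^ k * (x / y) ^ k / x ^ k).
Proof.
move=> Gx Gy; have [ux uy] := (Gamma2_unit Gx, Gamma2_unit Gy).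
have uxk j : x ^ j \is a GRing.unit by exact: unitrXz.
elim/int_rect: k => [|m IHm|m IHm].
- by rewrite !expr0z !mul1r invr1; exact: gen_1.
- rewrite -[m.+1]addn1 PoszD.
  have -> : y ^ (m%:Z + 1) * (x / y) ^ (m%:Z + 1) / x ^ (m%:Z + 1) =
            y * (y ^ m * (x / y) ^ m / x ^ m) * x ^ (m%:Z + 1) / y / x ^ (m%:Z + 1).
    have yS : y ^ (m%:Z + 1) = y * y ^ m by rewrite addrC exprzDr // expr1z.
    by rewrite yS !exprzDr ?unitrMl ?unitrV // !expr1z !mulrA divrK.
  by apply: Gamma2'_conjM => //; exact: gen_exprz.
- rewrite -[m.+1]addn1 PoszD opprD.
  set k := - m%:Z.
  have -> : y ^ (k - 1) * (x / y) ^ (k - 1) / x ^ (k - 1) =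
            y^-1 * (y ^ k * (x / y) ^ k / x ^ k) * x ^ k / y^-1 / x ^ k.
    have yP : y ^ (k - 1) = y^-1 * y ^ k by rewrite addrC exprzDr // exprN1.
    rewrite yP !exprzDr ?unitrMl ?unitrV // !exprN1 !invrM ?unitrV // !invrK.
    by rewrite !mulrA !divrK.
  by apply: Gamma2'_conjM => //; [exact: gen_V | exact: gen_exprz].
Qed.

Lemma Phi_Gamma2' n g : Gamma2' g -> Phi n g.
Proof. by move=> G'g; apply: gen_in; right; right. Qed.

Section Action.
Variable R : realType.

(* The cusp with homogeneous coordinates [x : y]. *)
Definition cusp (x y : rat) : hpt R := if y == 0 then Hinf else Hcusp (x / y).

Lemma Hinf_cusp : Hinf = cusp 1 0.
Proof. by rewrite /cusp eqxx. Qed.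

Lemma Hcusp_cusp q : Hcusp q = cusp q 1.
Proof. by rewrite /cusp oner_eq0 divr1. Qed.

Lemma cuspZ (k x y : rat) : k != 0 -> cusp (k * x) (k * y) = cusp x y.
Proof.
move=> k0; rewrite /cusp mulf_eq0 (negbTE k0) /=.
by case: ifP => // _; rewrite invfM mulrACA mulfV // mul1r.
Qed.

Lemma act_cusp (g : mat2) (x y : rat) : (x != 0) || (y != 0) ->
  act g (cusp x y) =
  cusp ((g 0 0)%:~R * x + (g 0 1)%:~R * y) ((g 1 0)%:~R * x + (g 1 1)%:~R * y).
Proof.
rewrite {1}/cusp; have [-> | y0 _] := eqVneq y 0; last first.
  have homog u v : u * x + v * y = y * (u * (x / y) + v) by field.
  by rewrite !homog cuspZ.
rewrite /= orbF => x0.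
by rewrite !mulr0 !addr0 ![_%:~R * x]mulrC cuspZ // /act /cusp intr_eq0.
Qed.

Lemma act_mul_cusp (g h : mat2) (x y : rat) : \det h != 0 -> (x != 0) || (y != 0) ->
  act (g * h) (cusp x y) = act g (act h (cusp x y)).
Proof.
move=> dh xy; rewrite !act_cusp ?mx2_vec_neq0 //.
by congr cusp; rewrite !mul_mx2E !rmorphD !rmorphM /=; ring.
Qed.

Lemma act_mul (g h : mat2) (p : hpt R) : h \is a GRing.unit -> inHbar p ->
  act (g * h) p = act g (act h p).
Proof.
move=> /unitmx2_det_neq0 dh; case: p => [_ | q _ | z Imz].
- by rewrite Hinf_cusp act_mul_cusp ?oner_neq0.
- by rewrite Hcusp_cusp act_mul_cusp ?oner_neq0 ?orbT.
rewrite /act mobius_div ?upper_half_affine_neq0 ?det_neq0_row1 //.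
by congr (Hup (_ / _)); rewrite !mul_mx2E !rmorphD !rmorphM /=; ring.
Qed.

Lemma act1 (p : hpt R) : act 1 p = p.
Proof.
case: p => [|q|z]; rewrite /act !mxE /= ?rmorph0 ?rmorph1;
  by rewrite ?mul0r ?add0r ?mul1r ?addr0 ?divr1 ?oner_eq0.
Qed.

Lemma act_inv (g : mat2) (p : hpt R) : g \is a GRing.unit -> inHbar p ->
  act g^-1 (act g p) = p.
Proof. by move=> ug Hp; rewrite -act_mul // mulVr // act1. Qed.

Lemma act_exprz_fixed (g : mat2) (p : hpt R) (k : int) :
  g \is a GRing.unit -> inHbar p -> act g p = p -> act (g ^ k) p = p.
Proof.
move=> ug Hp gp; have fixn m : act (g ^+ m) p = p.
  by elim: m => [|m IHm]; rewrite ?act1 // exprSr act_mul // gp.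
case: k => m; first exact: fixn.
change (act (g ^+ m.+1)^-1 p = p).
by rewrite -{1}(fixn m.+1) act_inv ?unitrX.
Qed.

Lemma act_matA_m1 : act matA (Hcusp (-1)) = Hcusp 1 :> hpt R.
Proof. by rewrite /act !mxE /=; congr Hcusp; apply/eqP. Qed.

Lemma act_matB_m1 : act matB (Hcusp (-1)) = Hcusp 1 :> hpt R.
Proof. by rewrite /act !mxE /=; congr Hcusp; apply/eqP. Qed.

End Action.

Theorem lemma3p1 (R : realType) (n : nat) (hn : (1 <= n)%N) :
  (forall p : hpt R, inHbar p ->
     piEq n (act matA (act matB p)) (act matB (act matA p))) /\
  (forall k : int,
     piEq n (act (matA ^ k) (Hcusp 1)) (act (matB ^ k) (Hcusp 1 : hpt R))).
Proof.
have [uA uB] := (Gamma2_unit Gamma2_matA, Gamma2_unit Gamma2_matB).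
split=> [p Hp | k].
  exists (matB * matA / matB / matA); split.
    exact/Phi_Gamma2'/Gamma2'_commutator/Gamma2_matA/Gamma2_matB.
  have uAB : matA * matB \is a GRing.unit by rewrite unitrMl.
  by rewrite -(act_mul matA) // -!act_mul // mulrA !divrK.
have uC : matA / matB \is a GRing.unit by rewrite unitrMl ?unitrV.
have fix1 : act (matA / matB) (Hcusp 1) = Hcusp 1 :> hpt R.
  by rewrite act_mul ?unitrV // -{1}(act_matB_m1 R) act_inv // act_matA_m1.
exists (matB ^ k * (matA / matB) ^ k / matA ^ k); split.
  exact/Phi_Gamma2'/Gamma2'_exprz_coset/Gamma2_matB/Gamma2_matA.
rewrite -act_mul; [|exact: unitrXz|done].
rewrite divrK; last exact: unitrXz.
rewrite act_mul; [|exact: unitrXz|done].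
by rewrite (act_exprz_fixed _ uC).
Qed.
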